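(* Let $1\le p<\infty$ and let $(X,\mathcal B,\mu,f)$ be a dissipative system of bounded distortion generated by $W$. There exists $L\in\mathbb R$ such that for all $n,k\in\mathbb Z$ and all $\varphi\in L^p(X)$, \[ \frac1L\,\frac{\mu(f^k(W))}{\mu(f^{k+n}(W))}\int_{f^{k+n}(W)}|\varphi|^p\,d\mu\le\int_{f^k(W)}|\varphi|^p\circ f^n\,d\mu\le L\,\frac{\mu(f^k(W))}{\mu(f^{k+n}(W))}\int_{f^{k+n}(W)}|\varphi|^p\,d\mu. \]
   Context: $(X,\mathcal B,\mu)$ is $\sigma$-finite, $f:X\to X$ is bimeasurable invertible with Radon–Nikodym derivatives of $\mu\circ f$ and $\mu\circ f^{-1}$ w.r.t. $\mu$ bounded below. Dissipative generated by $W$: $W\in\mathcal B$, $0<\mu(W)<\infty$, $X=\dot\bigcup_{k\in\mathbb Z}f^k(W)$ (pairwise disjoint). Bounded distortion: there is $K>0$ with $\frac1K\frac{\mu(f^k(W))}{\mu(W)}\le\frac{\mu(f^k(B))}{\mu(B)}\le K\frac{\mu(f^k(W))}{\mu(W)}$ for all $k\in\mathbb Z$ and measurable $B\subseteq W$ with $\mu(B)>0$. *)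

From HB Require Import structures.
From mathcomp Require Import all_boot all_order all_algebra.
From mathcomp Require Import all_classical all_reals all_analysis.
Set Implicit Arguments. Unset Strict Implicit. Unset Printing Implicit Defensive.
Import Order.TTheory GRing.Theory Num.Theory.
Local Open Scope classical_set_scope.
Local Open Scope ring_scope.

Definition iterz (T : Type) (f finv : T -> T) (k : int) : T -> T :=
  match k with
  | Posz n => iter n f
  | Negz n => iter n.+1 finv
  end.

Definition bimeas_invertible (d : measure_display) (T : measurableType d)
  (f finv : T -> T) : Prop :=
  [/\ cancel f finv, cancel finv f,
      measurable_fun setT f & measurable_fun setT finv].

Definition RN_bounded_below (d : measure_display) (T : measurableType d)
  (R : realType) (mu : {measure set T -> \bar R}) (g : T -> T) : Prop :=
  exists (h : T -> R) (c : R), [/\ 0 < c, measurable_fun setT h,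
    (forall x, c <= h x) &
    forall A, measurable A -> mu (g @` A) = (\int[mu]_(x in A) (h x)%:E)%E].

Definition dissipative_gen (d : measure_display) (T : measurableType d)
  (R : realType) (mu : {measure set T -> \bar R}) (f finv : T -> T)
  (W : set T) : Prop :=
  [/\ measurable W, (0 < mu W)%E, (mu W < +oo)%E,
      [set: T] = \bigcup_(k in [set: int]) (iterz f finv k @` W) &
      forall i j : int, i != j ->
        (iterz f finv i @` W) `&` (iterz f finv j @` W) = set0].

Definition bounded_distortion (d : measure_display) (T : measurableType d)
  (R : realType) (mu : {measure set T -> \bar R}) (f finv : T -> T)
  (W : set T) : Prop :=
  exists K : R, 0 < K /\
    forall (k : int) (B : set T), measurable B -> B `<=` W -> (0 < mu B)%E ->
      ((K^-1)%:E * (mu (iterz f finv k @` W) / mu W)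
         <= mu (iterz f finv k @` B) / mu B)%E /\
      (mu (iterz f finv k @` B) / mu B
         <= K%:E * (mu (iterz f finv k @` W) / mu W))%E.

Definition in_Lp (d : measure_display) (T : measurableType d)
  (R : realType) (mu : {measure set T -> \bar R}) (p : R) (phi : T -> R) : Prop :=
  measurable_fun setT phi /\
  (\int[mu]_x (`|phi x| `^ p)%:E < +oo)%E.

From HB Require Import structures.
From mathcomp Require Import all_boot all_order all_algebra.
From mathcomp Require Import all_classical all_reals all_analysis.
From mathcomp Require Import zify ring measurable_realfun.
Import Order.TTheory GRing.Theory Num.Theory.
Local Open Scope classical_set_scope.
Local Open Scope ring_scope.

(* Fix A inside f^(k+n)(W) and pull it back to B := f^-(k+n)(A), a subset of W.
   Bounded distortion at times k and k+n compares mu(f^k B)/mu(B) and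
   mu(f^(k+n) B)/mu(B) = mu(A)/mu(B) with mu(f^k W)/mu(W) and
   mu(f^(k+n) W)/mu(W) up to a factor K each, whence
   mu(f^-n A) <= K^2 mu(f^k W)/mu(f^(k+n) W) mu(A), and symmetrically.  So the
   push-forward of mu by f^n is comparable to mu on f^(k+n)(W) with constant
   K^2, and integrating |phi|^p against both measures gives L = K^2.
   The ratios make sense because every mu(f^j W) is finite: otherwise
   sigma-finiteness yields a piece of f^j W of positive finite measure whose
   pull-back to W violates the lower distortion bound. *)

Section IntegerIterates.
Context {T : Type} {f finv : T -> T}.
Hypotheses (fK : cancel f finv) (finvK : cancel finv f).
Local Notation F := (iterz f finv).

Lemma iterzS (z : int) x : F (z + 1) x = f (F z x).
Proof.
case: z => [n|[|n]].
- by have -> : n%:Z + 1 = n.+1%:Z by lia.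
- have -> : -1 + 1 = 0 :> int by lia.
  by rewrite /= finvK.
- have -> : Negz n.+1 + 1 = Negz n by rewrite !NegzE; lia.
  by rewrite /= finvK.
Qed.

Lemma iterzP (z : int) x : F (z - 1) x = finv (F z x).
Proof.
case: z => [[|n]|n].
- by have -> : 0 - 1 = Negz 0 by lia.
- have -> : n.+1%:Z - 1 = n%:Z by lia.
  by rewrite /= fK.
- by have -> : Negz n - 1 = Negz n.+1 by rewrite !NegzE; lia.
Qed.

Lemma iterzD (a b : int) x : F (a + b) x = F a (F b x).
Proof.
elim/int_rect: a x => [|n IH|n IH] x; first by rewrite add0r.
- have -> : n.+1%:Z = n%:Z + 1 by lia.
  by rewrite addrAC !iterzS IH.
- have -> : - n.+1%:Z = - n%:Z - 1 by lia.
  by rewrite addrAC !iterzP IH.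
Qed.

Lemma iterzK (a : int) : cancel (F a) (F (- a)).
Proof. by move=> x; rewrite -iterzD addNr. Qed.

Lemma iterzNK (a : int) : cancel (F (- a)) (F a).
Proof. by move=> x; rewrite -iterzD addrN. Qed.

Lemma image_iterz (a : int) A : F a @` A = F (- a) @^-1` A.
Proof.
apply/seteqP; split => [_ [x Ax <-]|x Ax]; first by rewrite /= iterzK.
by exists (F (- a) x); rewrite ?iterzNK.
Qed.

Lemma image_iterzD (a b : int) A : F a @` (F b @` A) = F (a + b) @` A.
Proof. by rewrite image_comp; congr image; apply/funext => x /=; rewrite iterzD. Qed.

Lemma image_iterzK (a : int) A : F (- a) @` (F a @` A) = A.
Proof. by rewrite image_iterzD addNr; exact: image_id. Qed.

Lemma image_iterzNK (a : int) A : F a @` (F (- a) @` A) = A.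
Proof. by rewrite image_iterzD addrN; exact: image_id. Qed.

End IntegerIterates.

Lemma EFin_div {R : realDomainType} (x y : R) :
  y != 0 -> (x%:E / y%:E = (x / y)%:E)%E.
Proof. by move=> y0; rewrite inver (negbTE y0). Qed.

Lemma le_scaled_of_ratio_bounds {R : realFieldType} (x y m w a b K : R) :
  0 < m -> 0 < w -> 0 <= a -> 0 < b -> 0 < K ->
  x / m <= K * (a / w) -> K^-1 * (b / w) <= y / m -> x <= K ^+ 2 * (a / b) * y.
Proof.
move=> m0 w0 a0 b0 K0; rewrite ler_pdivrMr// ler_pdivlMr// => xm byw.
apply: (le_trans xm).
have -> : K * (a / w) * m = K ^+ 2 * (a / b) * (K^-1 * (b / w) * m).
  by field; rewrite ?gt_eqF.
by rewrite ler_wpM2l// !mulr_ge0// ?invr_ge0 ?ltW.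
Qed.

Section MeasureFacts.
Context {d : measure_display} {T : measurableType d} {R : realType}.

Lemma ge0_le_integral_scaled_measure (m1 m2 : {measure set T -> \bar R})
    (D : set T) (C : R) (g : T -> \bar R) :
  measurable D -> 0 <= C ->
  (forall A, measurable A -> A `<=` D -> (m1 A <= C%:E * m2 A)%E) ->
  (forall x, 0 <= g x)%E -> measurable_fun setT g ->
  (\int[m1]_(x in D) g x <= C%:E * \int[m2]_(x in D) g x)%E.
Proof.
move=> mD C0 m12 g0 mg.
have restrE (m : {measure set T -> \bar R}) :
    (\int[m]_(x in D) g x = \int[mrestr m mD]_(x in D) g x)%E.
  by apply: eq_measure_integral => A mA AD; rewrite -[RHS]/(m (A `&` D)) setIidl.
rewrite restrE (restrE m2) -[C]/((NngNum C0)%:num) -ge0_integral_mscale//.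
  apply: ge0_le_measure_integral => // A mA.
  exact: m12 (measurableI _ _ mA mD) (@subIsetr _ _ _).
exact: measurable_funS mg.
Qed.

Variable mu : {measure set T -> \bar R}.

Lemma RN_bounded_below_image_null (g : T -> T) (A : set T) :
  RN_bounded_below mu g -> measurable A -> mu A = 0 -> mu (g @` A) = 0.
Proof.
move=> [h [c [_ mh _ hA]]] mA A0; rewrite hA// null_set_integral//.
by apply/measurable_EFinP; exact: measurable_funS mh.
Qed.

Lemma measure_subset_fin_num {A B : set T} :
  measurable A -> measurable B -> A `<=` B -> (mu B < +oo)%E ->
  mu A \is a fin_num.
Proof.
move=> mA mB AB Boo; rewrite ge0_fin_numE ?measure_ge0//.
by apply: le_lt_trans Boo; apply: le_measure; rewrite ?inE.
Qed.

Lemma sigma_finite_finite_subset {A : set T} :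
  sigma_finite setT mu -> measurable A -> (0 < mu A)%E ->
  exists2 B, measurable B /\ B `<=` A & (0 < mu B < +oo)%E.
Proof.
move=> [G GT mG] mA A0.
have mAG i : measurable (A `&` G i) by exact: measurableI (mG i).1.
have [i AGi] : exists i, (0 < mu (A `&` G i))%E.
  apply: contrapT => AG0; move: A0; apply/negP; rewrite -leNgt.
  rewrite (le_trans (measure_sigma_subadditive mu mAG mA _))//.
    move=> x Ax; have : [set: T] x by [].
    by rewrite GT => -[i _ Gix]; exists i.
  rewrite eseries0// => i _ _; apply/eqP; rewrite -measure_le0 leNgt.
  by apply/negP => AGi; apply: AG0; exists i.
exists (A `&` G i); first by split; [exact: mAG|exact: subIsetl].
rewrite AGi /=; apply: le_lt_trans (mG i).2.
by apply: le_measure; rewrite ?inE; [exact: mAG|exact: (mG i).1|exact: subIsetr].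
Qed.

End MeasureFacts.

Section NonsingularIterates.
Context {d : measure_display} {T : measurableType d} {R : realType}
  {mu : {measure set T -> \bar R}} {f finv : T -> T}.
Hypotheses (fK : cancel f finv) (finvK : cancel finv f).
Hypotheses (mf : measurable_fun setT f) (mfinv : measurable_fun setT finv).
Hypotheses (nullf : forall A, measurable A -> mu A = 0 -> mu (f @` A) = 0)
  (nullfinv : forall A, measurable A -> mu A = 0 -> mu (finv @` A) = 0).
Local Notation F := (iterz f finv).

Lemma iterzS_comp (z : int) : F (z + 1) = f \o F z.
Proof. by apply/funext => x; rewrite (iterzS finvK). Qed.

Lemma iterzP_comp (z : int) : F (z - 1) = finv \o F z.
Proof. by apply/funext => x; rewrite (iterzP fK). Qed.

Lemma measurable_iterz (j : int) : measurable_fun setT (F j).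
Proof.
elim/int_rect: j => [|n IH|n IH]; first exact: measurable_id.
- have -> : n.+1%:Z = n%:Z + 1 by lia.
  by rewrite iterzS_comp; exact: measurableT_comp.
- have -> : - n.+1%:Z = - n%:Z - 1 by lia.
  by rewrite iterzP_comp; exact: measurableT_comp.
Qed.

Lemma measurable_image_iterz (j : int) {A} : measurable A -> measurable (F j @` A).
Proof.
move=> mA; rewrite (image_iterz fK finvK) -[X in measurable X]setTI.
exact: measurable_iterz.
Qed.

Lemma image_iterz_null (j : int) {A} : measurable A -> mu A = 0 -> mu (F j @` A) = 0.
Proof.
elim/int_rect: j A => [|n IH|n IH] A mA A0; first by rewrite image_id.
- have -> : n.+1%:Z = n%:Z + 1 by lia.
  rewrite iterzS_comp -image_comp.
  by apply: nullf; [exact: measurable_image_iterz|exact: IH].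
- have -> : - n.+1%:Z = - n%:Z - 1 by lia.
  rewrite iterzP_comp -image_comp.
  by apply: nullfinv; [exact: measurable_image_iterz|exact: IH].
Qed.

Lemma image_iterz_gt0 (j : int) {A} :
  measurable A -> (0 < mu A)%E -> (0 < mu (F j @` A))%E.
Proof.
move=> mA A0; rewrite lt0e measure_ge0 andbT; apply/eqP => FA0.
have := image_iterz_null (- j) (measurable_image_iterz j mA) FA0.
by rewrite (image_iterzK fK finvK) => A00; rewrite A00 ltxx in A0.
Qed.

Section BoundedDistortion.
Context {W : set T} {K : R}.
Hypotheses (mW : measurable W) (W0 : (0 < mu W)%E) (Woo : (mu W < +oo)%E).
Hypothesis sigma_mu : sigma_finite setT mu.
Hypothesis K0 : 0 < K.
Hypothesis distortion : forall (k : int) (B : set T),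
  measurable B -> B `<=` W -> (0 < mu B)%E ->
  ((K^-1)%:E * (mu (F k @` W) / mu W) <= mu (F k @` B) / mu B)%E /\
  (mu (F k @` B) / mu B <= K%:E * (mu (F k @` W) / mu W))%E.
Local Notation I j := (F j @` W).

Lemma measure_iterzW_lt_oo (j : int) : (mu (I j) < +oo)%E.
Proof.
rewrite ltNge leye_eq; apply/negP => /eqP Ijoo.
have [B' [mB' B'I] /andP[B'0 B'oo]] := sigma_finite_finite_subset mu sigma_mu
  (measurable_image_iterz j mW) (image_iterz_gt0 j mW W0).
pose B := F (- j) @` B'.
have mB : measurable B := measurable_image_iterz (- j) mB'.
have BW : B `<=` W.
  by rewrite -(image_iterzK fK finvK j W); exact: image_subset.
have B0 : (0 < mu B)%E := image_iterz_gt0 (- j) mB' B'0.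
have [+ _] := distortion j B mB BW B0.
rewrite Ijoo /B (image_iterzNK fK finvK).
have Bfin : mu B \is a fin_num := measure_subset_fin_num mu mB mW BW Woo.
have Wfin : mu W \is a fin_num by rewrite ge0_fin_numE ?measure_ge0.
have B'fin : mu B' \is a fin_num by rewrite ge0_fin_numE ?measure_ge0.
have b0 : 0 < fine (mu B) by rewrite fine_gt0// B0 ltey_eq Bfin.
have w0 : 0 < fine (mu W) by rewrite fine_gt0// W0.
rewrite -(fineK Bfin) -(fineK Wfin) -(fineK B'fin) EFin_div ?gt_eqF//.
by rewrite inver gt_eqF// gt0_mulye ?lte_fin ?invr_gt0// gt0_muley ?lte_fin ?invr_gt0.
Qed.

Lemma measure_iterzW_fin_num (j : int) : mu (I j) \is a fin_num.
Proof. by rewrite ge0_fin_numE ?measure_ge0 ?measure_iterzW_lt_oo. Qed.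

Lemma fine_measure_iterzW_gt0 (j : int) : 0 < fine (mu (I j)).
Proof. by rewrite fine_gt0// image_iterz_gt0// measure_iterzW_lt_oo. Qed.

Lemma measure_subset_iterzW_fin_num (j : int) {A} :
  measurable A -> A `<=` I j -> mu A \is a fin_num.
Proof.
move=> mA AI; apply: (measure_subset_fin_num mu mA _ AI).
  exact: measurable_image_iterz.
exact: measure_iterzW_lt_oo.
Qed.

Lemma distortion_fine (k : int) {B} : measurable B -> B `<=` W -> (0 < mu B)%E ->
  K^-1 * (fine (mu (I k)) / fine (mu W)) <= fine (mu (F k @` B)) / fine (mu B)
  <= K * (fine (mu (I k)) / fine (mu W)).
Proof.
move=> mB BW B0.
have Bfin := measure_subset_fin_num mu mB mW BW Woo.
have Wfin : mu W \is a fin_num by rewrite ge0_fin_numE ?measure_ge0.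
have FBfin : mu (F k @` B) \is a fin_num.
  apply: (measure_subset_iterzW_fin_num k); first exact: measurable_image_iterz.
  exact: image_subset.
have b0 : 0 < fine (mu B) by rewrite fine_gt0// B0 ltey_eq Bfin.
have w0 : 0 < fine (mu W) by rewrite fine_gt0// W0.
have [] := distortion k B mB BW B0.
rewrite -(fineK Bfin) -(fineK Wfin) -(fineK FBfin) -(fineK (measure_iterzW_fin_num k)).
by rewrite !EFin_div ?gt_eqF// -!EFinM !lee_fin => -> ->.
Qed.

Lemma measure_image_iterz_le (k m : int) {A} : measurable A -> A `<=` I m ->
  (mu (F (k - m) @` A)
     <= (K ^+ 2 * (fine (mu (I k)) / fine (mu (I m))))%:E * mu A)%E.
Proof.
move=> mA AI; pose B := F (- m) @` A.
have mB : measurable B := measurable_image_iterz (- m) mA.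
have BW : B `<=` W.
  by rewrite -(image_iterzK fK finvK m W); exact: image_subset.
have FkB : F k @` B = F (k - m) @` A by rewrite (image_iterzD fK finvK).
have FmB : F m @` B = A by rewrite (image_iterzNK fK finvK).
have [B00|B0] : mu B = 0 \/ (0 < mu B)%E.
  by have := measure_ge0 mu B; rewrite le_eqVlt => /orP[/eqP <-|]; [left|right].
  rewrite -FkB image_iterz_null// mule_ge0// lee_fin mulr_ge0 ?exprn_ge0 ?ltW//.
  by rewrite divr_gt0 ?fine_measure_iterzW_gt0.
have /andP[_ up] := distortion_fine k mB BW B0.
have /andP[lo _] := distortion_fine m mB BW B0.
rewrite FkB in up; rewrite FmB in lo.
have Afin : mu A \is a fin_num := measure_subset_iterzW_fin_num m mA AI.
have FAfin : mu (F (k - m) @` A) \is a fin_num.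
  rewrite -FkB; apply: (measure_subset_iterzW_fin_num k).
    exact: measurable_image_iterz.
  exact: image_subset.
have b0 : 0 < fine (mu B).
  by rewrite fine_gt0// B0 ltey_eq (measure_subset_fin_num mu mB mW BW Woo).
have w0 : 0 < fine (mu W) by rewrite fine_gt0// W0.
rewrite -(fineK Afin) -(fineK FAfin) -EFinM lee_fin.
exact: le_scaled_of_ratio_bounds b0 w0 (ltW (fine_measure_iterzW_gt0 k))
  (fine_measure_iterzW_gt0 m) K0 up lo.
Qed.

Lemma pushforward_iterz_le (n k : int) {A} : measurable A -> A `<=` I (k + n) ->
  (pushforward mu (F n) A
     <= (K ^+ 2 * (fine (mu (I k)) / fine (mu (I (k + n)))))%:E * mu A)%E.
Proof.
move=> mA AI; rewrite /pushforward -[n in F n @^-1` _]opprK -(image_iterz fK finvK).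
by have := measure_image_iterz_le k (k + n) mA AI; rewrite opprD addNKr.
Qed.

Lemma le_pushforward_iterz (n k : int) {A} : measurable A -> A `<=` I (k + n) ->
  (mu A <= (K ^+ 2 * (fine (mu (I (k + n))) / fine (mu (I k))))%:E
            * pushforward mu (F n) A)%E.
Proof.
move=> mA AI; rewrite /pushforward -[n in F n @^-1` _]opprK -(image_iterz fK finvK).
have mA' : measurable (F (- n) @` A) := measurable_image_iterz (- n) mA.
have A'I : F (- n) @` A `<=` I k.
  have -> : I k = F (- n) @` I (k + n) by rewrite (image_iterzD fK finvK) addrC addrK.
  exact: image_subset.
have := measure_image_iterz_le (k + n) k mA' A'I.
by rewrite addrAC subrr add0r (image_iterzNK fK finvK).
Qed.

Lemma integral_iterz_bounds (n k : int) (g : T -> \bar R) :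
  (forall x, 0 <= g x)%E -> measurable_fun setT g ->
  (((K ^+ 2)^-1)%:E * (mu (I k) / mu (I (k + n))) * \int[mu]_(x in I (k + n)) g x
     <= \int[mu]_(x in I k) g (F n x))%E /\
  (\int[mu]_(x in I k) g (F n x)
     <= (K ^+ 2)%:E * (mu (I k) / mu (I (k + n))) * \int[mu]_(x in I (k + n)) g x)%E.
Proof.
move=> g0 mg.
have a0 := fine_measure_iterzW_gt0 k; have b0 := fine_measure_iterzW_gt0 (k + n).
set a := fine (mu (I k)) in a0 *; set b := fine (mu (I (k + n))) in b0 *.
have mIkn : measurable (I (k + n)) := measurable_image_iterz (k + n) mW.
have mFn : measurable_fun setT (F n) := measurable_iterz n.
have push : (\int[mu]_(x in I k) g (F n x)
    = \int[pushforward mu (F n)]_(y in I (k + n)) g y)%E.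
  rewrite ge0_integral_pushforward//; last exact: measurable_funS mg.
  by rewrite -[n in F n @^-1` _]opprK -(image_iterz fK finvK) (image_iterzD fK finvK) addrC addrK.
have ratio : (mu (I k) / mu (I (k + n)) = (a / b)%:E)%E.
  by rewrite -(fineK (measure_iterzW_fin_num k))
    -(fineK (measure_iterzW_fin_num (k + n))) EFin_div ?gt_eqF.
have up : (\int[pushforward mu (F n)]_(y in I (k + n)) g y
    <= (K ^+ 2 * (a / b))%:E * \int[mu]_(y in I (k + n)) g y)%E.
  apply: ge0_le_integral_scaled_measure => //; last by move=> A; exact: pushforward_iterz_le.
  by rewrite mulr_ge0 ?exprn_ge0 ?divr_ge0 ?ltW.
have lo : (\int[mu]_(y in I (k + n)) g y
    <= (K ^+ 2 * (b / a))%:E * \int[pushforward mu (F n)]_(y in I (k + n)) g y)%E.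
  apply: ge0_le_integral_scaled_measure => //; last by move=> A; exact: le_pushforward_iterz.
  by rewrite mulr_ge0 ?exprn_ge0 ?divr_ge0 ?ltW.
rewrite push ratio; split; last by rewrite -EFinM.
rewrite -EFinM; apply: le_trans (lee_wpmul2l _ lo) _.
  by rewrite lee_fin mulr_ge0 ?invr_ge0 ?exprn_ge0 ?divr_ge0 ?ltW.
rewrite muleA -EFinM.
have -> : (K ^+ 2)^-1 * (a / b) * (K ^+ 2 * (b / a)) = 1.
  by field; rewrite ?gt_eqF// expf_neq0// gt_eqF.
by rewrite mul1e.
Qed.

End BoundedDistortion.
End NonsingularIterates.

Theorem lemma4p1 (d : measure_display) (T : measurableType d) (R : realType)
  (mu : {measure set T -> \bar R}) (f finv : T -> T) (W : set T) (p : R)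
  (hp : 1 <= p)
  (hsigma : sigma_finite setT mu)
  (hf : bimeas_invertible f finv)
  (hRNf : RN_bounded_below mu f)
  (hRNfinv : RN_bounded_below mu finv)
  (hW : dissipative_gen mu f finv W)
  (hbd : bounded_distortion mu f finv W) :
  exists L : R, 0 < L /\
    forall (n k : int) (phi : T -> R), in_Lp mu p phi ->
      let Ik := iterz f finv k @` W in
      let Ikn := iterz f finv (k + n) @` W in
      ((L^-1)%:E * (mu Ik / mu Ikn) * \int[mu]_(x in Ikn) (`|phi x| `^ p)%:E
         <= \int[mu]_(x in Ik) (`|phi (iterz f finv n x)| `^ p)%:E)%E /\
      (\int[mu]_(x in Ik) (`|phi (iterz f finv n x)| `^ p)%:E
         <= L%:E * (mu Ik / mu Ikn) * \int[mu]_(x in Ikn) (`|phi x| `^ p)%:E)%E.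
Proof.
case: hf => fK finvK mf mfinv; case: hW => mW W0 Woo _ _; case: hbd => K [K0 hK].
have nullf A := @RN_bounded_below_image_null _ _ _ mu f A hRNf.
have nullfinv A := @RN_bounded_below_image_null _ _ _ mu finv A hRNfinv.
exists (K ^+ 2); split; first exact: exprn_gt0.
move=> n k phi [mphi _] /=.
apply: (integral_iterz_bounds fK finvK mf mfinv nullf nullfinv mW W0 Woo hsigma K0 hK).
  by move=> x; rewrite lee_fin powR_ge0.
by apply/measurable_EFinP; apply: (measurableT_comp (measurable_powR p));
  exact: measurableT_comp.
Qed.
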